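(* There is an absolute constant $\bar\epsilon>0$ with the following property. Let $T>0$, $\delta_1>0$, and let $a,b,c$ be real-valued bounded functions on $[0,T]\times\mathbb R^n\times\mathbb R^n$ such that $b(t,x,\xi)\ge\delta_1 t$, $|ac|\le\bar\epsilon\,b^2$ and $|c|\le\bar\epsilon\,b^{3/2}$ everywhere. Then there exists $\epsilon_1>0$ such that the symmetric matrix $S-\epsilon_1 t\,\mathrm{diag}(1,1,b)$ is positive semidefinite at every $(t,x,\xi)\in[0,T]\times\mathbb R^n\times\mathbb R^n$, where $$S=\frac13\begin{pmatrix}3&2a&-b\\ 2a&2(a^2+b)&-ab-3c\\ -b&-ab-3c&b^2-2ac\end{pmatrix}.$$ *)

(* the statement is pointwise algebraic, stated over any real closed field. *)
From HB Require Import structures.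
From mathcomp Require Import all_boot all_order all_algebra.
Set Implicit Arguments. Unset Strict Implicit. Unset Printing Implicit Defensive.
Import Order.TTheory GRing.Theory Num.Theory.
Local Open Scope ring_scope.

Definition Smat (R : fieldType) (a b c : R) : 'M[R]_3 :=
  \matrix_(i < 3, j < 3)
    (3%:R^-1 * match nat_of_ord i, nat_of_ord j with
     | 0, 0 => 3%:R
     | 0, 1 | 1, 0 => 2%:R * a
     | 0, 2 | 2, 0 => - b
     | 1, 1 => 2%:R * (a ^+ 2 + b)
     | 1, 2 | 2, 1 => - (a * b) - 3%:R * c
     | _, _ => b ^+ 2 - 2%:R * a * c
     end).

Definition Dmat (R : nzRingType) (b : R) : 'M[R]_3 :=
  diag_mx (\row_(i < 3) (if nat_of_ord i == 2%N then b else 1)).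

Definition psd (R : numDomainType) (m : nat) (M : 'M[R]_m) : Prop :=
  forall v : 'cV[R]_m, 0 <= (v^T *m M *m v) 0 0.

(* Completing squares, 3 v^T S v = 3 L^2 + 2/3 (a y - b z / 2)^2 + 2/3 Q(y, z) with
   L = x + 2/3 a y - b/3 z and Q(y, z) = 3 b y^2 - 9 c y z + (3/4 b^2 - 3 a c) z^2.
   The smallness of c and a c with respect to b makes Q dominate 2 b y^2 + b^2 z^2 / 2,
   so v^T S v >= L^2 + 4/9 b y^2 + 1/9 b^2 z^2.  Writing x = L - 2/3 a y + b/3 z gives
   x^2 + y^2 + b z^2 <= 3 L^2 + (4/3 a^2 + 1) y^2 + (b^2/3 + b) z^2, and comparing the
   coefficients shows that S - u diag(1, 1, b) is positive semidefinite as soon as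
   u (3 a^2 + 3 b + 9) <= b.  Since b >= delta1 t and a, b are bounded, u = eps1 t
   qualifies for eps1 = delta1 / (3 sup a^2 + 3 sup |b| + 9). *)

From HB Require Import structures.
From mathcomp Require Import all_boot all_order all_algebra.
From mathcomp Require Import ring lra.
Import Order.TTheory GRing.Theory Num.Theory.
Local Open Scope ring_scope.

Definition Sform {R : comPzRingType} (a b c x y z : R) : R :=
  3 * x ^+ 2 + 4 * a * x * y - 2 * b * x * z + 2 * (a ^+ 2 + b) * y ^+ 2
  - 2 * (a * b + 3 * c) * y * z + (b ^+ 2 - 2 * a * c) * z ^+ 2.

Lemma Smat_Dmat_quadE (R : fieldType) (a b c u : R) (v : 'cV[R]_3) :
  (v^T *m (Smat a b c - u *: Dmat b) *m v) 0 0 =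
  3^-1 * Sform a b c (v 0 0) (v 1 0) (v 2 0)
  - u * (v 0 0 ^+ 2 + v 1 0 ^+ 2 + b * v 2 0 ^+ 2).
Proof.
rewrite !mxE !big_ord_recr !big_ord0 /= !mxE !big_ord_recr !big_ord0 /=.
rewrite !mxE /= mulr0n mulr1n /Sform.
have -> : widen_ord (leqnSn 2) (widen_ord (leqnSn 1) ord_max) = 0 :> 'I_3
  by apply/val_inj.
have -> : widen_ord (leqnSn 2) ord_max = 1 :> 'I_3 by apply/val_inj.
have -> : ord_max = 2 :> 'I_3 by apply/val_inj.
ring.
Qed.

Section RealField.
Variable R : realFieldType.
Implicit Types a b c e s u x y z : R.

Lemma sqrD3_le x y z : (x + y + z) ^+ 2 <= 3 * (x ^+ 2 + y ^+ 2 + z ^+ 2).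
Proof. have := sqr_ge0 (x - y); have := sqr_ge0 (y - z); have := sqr_ge0 (x - z); lra. Qed.

Lemma cross_term_le e s b c y z : 0 <= e -> 0 <= s -> s ^+ 2 = b ->
  `|c| <= e * (b * s) -> `|c * y * z| *+ 2 <= e * (b * y ^+ 2 + b ^+ 2 * z ^+ 2).
Proof.
move=> e_ge0 s_ge0 sb hc; set p := s * `|y|; set q := b * `|z|.
have cyz_le : `|c * y * z| <= e * (p * q).
  rewrite !normrM /p /q.
  have := ler_wpM2r (normr_ge0 z) (ler_wpM2r (normr_ge0 y) hc); lra.
have amgm : (p * q) *+ 2 <= b * y ^+ 2 + b ^+ 2 * z ^+ 2.
  have p2 : p ^+ 2 = b * y ^+ 2 by rewrite exprMn sb real_normK ?num_real.
  have q2 : q ^+ 2 = b ^+ 2 * z ^+ 2 by rewrite exprMn real_normK ?num_real.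
  by rewrite -p2 -q2; have := sqr_ge0 (p - q); rewrite sqrrB; lra.
have := ler_wpM2l e_ge0 amgm; rewrite mulrnAr; lra.
Qed.

Lemma Sform_ge a b c s x y z : 0 <= s -> s ^+ 2 = b ->
    `|a * c| <= 100^-1 * b ^+ 2 -> `|c| <= 100^-1 * (b * s) ->
  3 * (x + 2 / 3 * a * y - b / 3 * z) ^+ 2 + 4 / 3 * b * y ^+ 2
    + 3^-1 * b ^+ 2 * z ^+ 2 <= Sform a b c x y z.
Proof.
move=> s_ge0 sb hac hc.
have b_ge0 : 0 <= b by rewrite -sb sqr_ge0.
have e_ge0 : 0 <= 100^-1 :> R by rewrite invr_ge0 ler0n.
have hcyz := cross_term_le _ _ _ _ y z e_ge0 s_ge0 sb hc.
have cyz_le := ler_norm (c * y * z).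
have acz_le := ler_wpM2r (sqr_ge0 z) (le_trans (ler_norm (a * c)) hac).
have := mulr_ge0 b_ge0 (sqr_ge0 y); have := sqr_ge0 (b * z).
have := sqr_ge0 (a * y - b / 2 * z).
have -> : Sform a b c x y z = 3 * (x + 2 / 3 * a * y - b / 3 * z) ^+ 2
    + 2 / 3 * (a * y - b / 2 * z) ^+ 2 + 2 / 3 * (3 * b * y ^+ 2
    - 9 * (c * y * z) + (3 / 4 * b ^+ 2 - 3 * (a * c)) * z ^+ 2).
  by rewrite /Sform; field.
rewrite exprMn; lra.
Qed.

Lemma psd_Smat_subD a b c s u : 0 <= s -> s ^+ 2 = b ->
    `|a * c| <= 100^-1 * b ^+ 2 -> `|c| <= 100^-1 * (b * s) ->
    0 <= u -> u * (3 * a ^+ 2 + 3 * b + 9) <= b ->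
  psd (Smat a b c - u *: Dmat b).
Proof.
move=> s_ge0 sb hac hc u_ge0 hu v; rewrite Smat_Dmat_quadE.
move: (v 0 0) (v 1 0) (v 2 0) => x y z.
have b_ge0 : 0 <= b by rewrite -sb sqr_ge0.
have Sge := Sform_ge _ _ _ _ x y z s_ge0 sb hac hc.
have x2_le : x ^+ 2 <= 3 * ((x + 2 / 3 * a * y - b / 3 * z) ^+ 2
    + (2 / 3 * a * y) ^+ 2 + (b / 3 * z) ^+ 2).
  have := sqrD3_le (x + 2 / 3 * a * y - b / 3 * z) (- (2 / 3 * a * y)) (b / 3 * z).
  by rewrite sqrrN; lra.
have w_gt0 : 0 < 3 * a ^+ 2 + 3 * b + 9 by have := sqr_ge0 a; lra.
have u_le : u <= 3^-1.
  rewrite -(ler_pM2r w_gt0); have := sqr_ge0 a; lra.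
have coefL : 0 <= (3^-1 - u) * (x + 2 / 3 * a * y - b / 3 * z) ^+ 2.
  by apply: mulr_ge0 _ (sqr_ge0 _); rewrite subr_ge0.
have coefy : 0 <= (4 / 9 * b - u * (4 / 3 * a ^+ 2 + 1)) * y ^+ 2.
  by apply: mulr_ge0 _ (sqr_ge0 y); have := mulr_ge0 u_ge0 b_ge0; lra.
have coefz : 0 <= b * (b - u * (3 * b + 9)) * z ^+ 2.
  have : 0 <= b - u * (3 * b + 9) by have := mulr_ge0 u_ge0 (sqr_ge0 a); lra.
  by move=> h; rewrite mulr_ge0 ?sqr_ge0 ?mulr_ge0.
have := ler_wpM2l u_ge0 x2_le; rewrite !exprMn; lra.
Qed.
End RealField.

Theorem mainTheorem4 :
  exists epsbar : rat, 0 < epsbar /\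
  forall (R : rcfType) (n : nat) (T delta1 : R)
         (a b c : R -> 'rV[R]_n -> 'rV[R]_n -> R),
    0 < T -> 0 < delta1 ->
    (exists M : R, forall t x xi, 0 <= t <= T -> `|a t x xi| <= M) ->
    (exists M : R, forall t x xi, 0 <= t <= T -> `|b t x xi| <= M) ->
    (exists M : R, forall t x xi, 0 <= t <= T -> `|c t x xi| <= M) ->
    (forall t x xi, 0 <= t <= T -> delta1 * t <= b t x xi) ->
    (forall t x xi, 0 <= t <= T ->
       `|a t x xi * c t x xi| <= ratr epsbar * b t x xi ^+ 2) ->
    (forall t x xi, 0 <= t <= T ->
       `|c t x xi| <= ratr epsbar * (b t x xi * Num.sqrt (b t x xi))) ->
    exists eps1 : R, 0 < eps1 /\
      forall t x xi, 0 <= t <= T ->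
        psd (Smat (a t x xi) (b t x xi) (c t x xi)
             - (eps1 * t) *: Dmat (b t x xi)).
Proof.
exists 100^-1; split; first by rewrite invr_gt0 ltr0n.
move=> R n T d1 a b c _ d1_gt0 [Ma hMa] [Mb hMb] _ b_lb hac hc.
have epsE : ratr (100^-1 : rat) = 100^-1 :> R by rewrite fmorphV rmorph_nat.
pose W := 3 * Ma ^+ 2 + 3 * `|Mb| + 9.
have W_gt0 : 0 < W by rewrite /W; have := sqr_ge0 Ma; have := normr_ge0 Mb; lra.
exists (d1 / W); split; first exact: divr_gt0.
move=> t x xi ht; have /andP[t_ge0 _] := ht.
have b_ge0 : 0 <= b t x xi.
  exact: le_trans (mulr_ge0 (ltW d1_gt0) t_ge0) (b_lb _ _ _ ht).
have a2_le : a t x xi ^+ 2 <= Ma ^+ 2.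
  by rewrite -real_normK ?num_real // ler_pM ?normr_ge0 ?hMa.
have b_le : b t x xi <= `|Mb|.
  exact: le_trans (ler_norm _) (le_trans (hMb _ _ _ ht) (ler_norm _)).
have u_ge0 : 0 <= d1 / W * t by rewrite mulr_ge0 // divr_ge0 // ltW.
apply: (@psd_Smat_subD _ _ _ _ (Num.sqrt (b t x xi))) => //.
- exact: sqrtr_ge0.
- exact: sqr_sqrtr.
- by rewrite -epsE hac.
- by rewrite -epsE hc.
have /(ler_wpM2l u_ge0) : 3 * a t x xi ^+ 2 + 3 * b t x xi + 9 <= W.
  by rewrite /W; lra.
have -> : d1 / W * t * W = d1 * t by field; rewrite gt_eqF.
by move/le_trans; apply; apply: b_lb.
Qed.
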